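(* Let $q$ be a prime power and $k\ge3$, $h\ge2$ integers, and $1\le u_0<u_1\le\dots\le u_h$ integers. Let $U_0,U_1,\dots,U_h$ be subspaces of $\mathbf F_q^k$ of dimensions $u_0,u_1,\dots,u_h$ with $U_i\cap U_j=U_0$ for all distinct $i,j\in\{1,\dots,h\}$, and assume $q^k-q^{k-1}>q^{u_0}-1+\sum_{i=1}^h(q^{u_i}-q^{u_0})$. Let $U$ be the set of nonzero vectors of $\mathbf F_q^k$ not in $U_1\cup\dots\cup U_h$, let $\widetilde G$ be a matrix whose columns consist of exactly one representative of each class $\{\lambda\mathbf v:\lambda\in\mathbf F_q^*\}$, $\mathbf v\in U$, and let $\mathbf C$ be the linear code with generator matrix $\widetilde G$. Then $\mathbf C$ is a linear $\big[\frac{(q^k-q^{u_0})-\sum_{i=1}^h(q^{u_i}-q^{u_0})}{q-1},\,k,\,d\big]_q$ code with $d\ge q^{k-1}-\sum_{i=1}^hq^{u_i-1}$. *)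

From HB Require Import structures.
From mathcomp Require Import all_boot all_order all_algebra.
Set Implicit Arguments. Unset Strict Implicit. Unset Printing Implicit Defensive.
Import Order.TTheory GRing.Theory Num.Theory.
Local Open Scope ring_scope.

Definition in_U (F : finFieldType) (k h : nat) (Us : nat -> {vspace 'cV[F]_k})
  (v : 'cV[F]_k) : bool :=
  (v != 0) && ~~ has (fun i => v \in Us i) (iota 1 h).

Definition same_class (F : finFieldType) (k : nat) (v w : 'cV[F]_k) : Prop :=
  exists a : F, a != 0 /\ w = a *: v.

Definition proj_rep_matrix (F : finFieldType) (k h n : nat)
  (Us : nat -> {vspace 'cV[F]_k}) (G : 'M[F]_(k, n)) : Prop :=
  [/\ (forall j : 'I_n, in_U h Us (col j G)),
      (forall j1 j2 : 'I_n, j1 != j2 -> ~ same_class (col j1 G) (col j2 G)) &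
      (forall v, in_U h Us v -> exists j : 'I_n, same_class v (col j G))].

Definition wt (F : finFieldType) (n : nat) (c : 'rV[F]_n) : nat :=
  #|[set j : 'I_n | c 0 j != 0]|.

(* Each class of the set U is represented by exactly one
   column of G, so counting vectors by columns gives n (q - 1) = |U| =
   q^k - |U_1 u ... u U_h|; the U_i form a sunflower with core U_0, whence
   |U_1 u ... u U_h| = q^u_0 + sum_i (q^u_i - q^u_0).  For a row x, the weight
   of x G times q - 1 counts the vectors of U off the hyperplane x v = 0.  When
   x <> 0 there are q^(k-1) (q - 1) vectors off that hyperplane, of which at most
   q^(u_i - 1) (q - 1) lie in U_i; this gives the distance bound.  If G had rank
   < k, some x <> 0 would kill every column, so all q^(k-1) (q - 1) vectors off
   x v = 0 would lie in the union minus 0, against the hypothesis on q^k - q^(k-1). *)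

From HB Require Import structures.
From mathcomp Require Import all_boot all_order all_algebra finfield.
From mathcomp Require Import ring.
Set Implicit Arguments. Unset Strict Implicit. Unset Printing Implicit Defensive.
Import Order.TTheory GRing.Theory Num.Theory.
Local Open Scope ring_scope.

Section UnionsOfSets.

Variable T : finType.

Lemma mem_bigcup_nat (A : nat -> {set T}) m n x :
  (x \in \bigcup_(m <= i < n) A i) = has (fun i => x \in A i) (index_iota m n).
Proof.
by elim: (index_iota m n) => [|i r IH]; rewrite ?big_nil ?big_cons ?inE ?IH.
Qed.

Lemma leq_card_bigcup (I : Type) (r : seq I) (A : I -> {set T}) :
  (#|\bigcup_(i <- r) A i| <= \sum_(i <- r) #|A i|)%N.
Proof.
elim: r => [|i r IH]; first by rewrite !big_nil cards0.
rewrite !big_cons; apply: leq_trans (leq_card_setU _ _) _; by rewrite leq_add2l.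
Qed.

Lemma card_sunflower (C : {set T}) (A : nat -> {set T}) m :
  (forall i j, (1 <= i <= m)%N -> (1 <= j <= m)%N -> i != j -> A i :&: A j \subset C) ->
  #|C :|: \bigcup_(1 <= i < m.+1) A i| = (#|C| + \sum_(1 <= i < m.+1) #|A i :\: C|)%N.
Proof.
elim: m => [|m IH] petals; first by rewrite !big_geq // setU0 addn0.
have petals_m i j : (1 <= i <= m)%N -> (1 <= j <= m)%N -> i != j -> A i :&: A j \subset C.
  move=> /andP[i_gt0 le_im] /andP[j_gt0 le_jm]; apply: petals.
    by rewrite i_gt0 leqW.
  by rewrite j_gt0 leqW.
rewrite big_nat_recr //= [in RHS]big_nat_recr //= addnA -(IH petals_m).
have -> : C :|: (\bigcup_(1 <= i < m.+1) A i :|: A m.+1) =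
    (C :|: \bigcup_(1 <= i < m.+1) A i) :|: (A m.+1 :\: C).
  by apply/setP => x; rewrite !inE; case: (x \in C); rewrite ?orbT.
rewrite cardsU (_ : _ :&: _ = set0) ?cards0 ?subn0 //.
apply/setP => x; rewrite !inE mem_bigcup_nat; apply/negbTE.
apply/negP => /andP[x_C_or_Ai /andP[x_notC x_Am1]].
case/orP: x_C_or_Ai => [x_C | /hasP[i]]; first by rewrite x_C in x_notC.
rewrite mem_index_iota => /andP[i_gt0 lt_im] x_Ai.
have petal_im : A i :&: A m.+1 \subset C.
  by apply: petals; rewrite ?i_gt0 ?leqnn ?(ltnW lt_im) ?(ltn_eqF lt_im).
have : x \in A i :&: A m.+1 by rewrite inE x_Ai.
by move/(subsetP petal_im); apply/negP.
Qed.

End UnionsOfSets.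

Section KernelOfLinearForm.

Variables (F : finFieldType) (k : nat) (x : 'rV[F]_k).

Definition ker_form : {vspace 'cV[F]_k} := lker (linfun (mulmx x)).

Lemma mem_ker_form v : (v \in ker_form) = (x *m v == 0).
Proof. by rewrite memv_ker lfunE. Qed.

Lemma dim_capv_ker_form (U : {vspace 'cV[F]_k}) :
  (\dim U <= (\dim (U :&: ker_form)).+1)%N.
Proof.
rewrite -(limg_ker_dim (linfun (mulmx x)) U) -[(\dim _).+1]addn1 leq_add2l.
by rewrite (leq_trans (dimvS (subvf _))) // dimvf.
Qed.

Lemma dim_ker_form : x != 0 -> (\dim ker_form).+1 = k.
Proof.
move=> x_neq0; have dim_full : \dim (fullv : {vspace 'cV[F]_k}) = k.
  by rewrite dimvf /dim /= muln1.
have := dim_capv_ker_form fullv; rewrite capfv dim_full => k_le.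
apply/eqP; rewrite eqn_leq k_le andbT -[X in (_ < X)%N]dim_full.
rewrite ltn_neqAle dimvS ?subvf // andbT (dimv_leqif_sup (subvf ker_form)).
apply: contra x_neq0 => /subvP ker_full; apply/eqP/rowP => j.
have := ker_full (delta_mx j 0) (memvf _).
by rewrite mem_ker_form -colE => /eqP/matrixP/(_ 0 0); rewrite !mxE.
Qed.

Lemma card_vspace_form_neq0 (U : {vspace 'cV[F]_k}) :
  #|[set v in U | x *m v != 0]| = (#|F| ^ \dim U - #|F| ^ \dim (U :&: ker_form))%N.
Proof.
have UK_sub : [set v in (U :&: ker_form)%VS] \subset [set v in U].
  by apply/subsetP => v; rewrite !inE memv_cap => /andP[].
have := cardsID [set v in (U :&: ker_form)%VS] [set v in U].
rewrite (setIidPr UK_sub) !cardsE !card_vspace => <-; rewrite addKn.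
apply: eq_card => v; rewrite [in LHS]unfold_in [in RHS]unfold_in /=.
rewrite !inE memv_cap mem_ker_form.
by case: (x *m v == 0); rewrite /= ?andbT ?andbF ?andNb.
Qed.

Lemma card_vspace_form_neq0_le (U : {vspace 'cV[F]_k}) :
  (#|[set v in U | x *m v != 0%R]| <= #|F| ^ (\dim U).-1 * (#|F| - 1))%N.
Proof.
have q_gt0 : (0 < #|F|)%N by rewrite ltnW ?finNzRing_gt1.
rewrite card_vspace_form_neq0 mulnBr muln1 -expnSr.
case: (\dim U) (dim_capv_ker_form U) => [|d] d_le /=.
  by rewrite leq_subLR ltn_addr // expn_gt0 q_gt0.
by rewrite leq_sub2l // leq_pexp2l.
Qed.

Lemma card_form_neq0 : x != 0 ->
  #|[set v : 'cV_k | x *m v != 0]| = (#|F| ^ k.-1 * (#|F| - 1))%N.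
Proof.
move=> x_neq0.
have -> : [set v : 'cV_k | x *m v != 0] = [set v in (fullv : {vspace 'cV_k}) | x *m v != 0].
  by apply/setP => v; rewrite !inE memvf.
rewrite card_vspace_form_neq0 capfv dimvf /dim /= muln1.
move: (\dim _) (dim_ker_form x_neq0) => d <-.
by rewrite mulnBr muln1 -expnSr.
Qed.

End KernelOfLinearForm.

Definition vspace_union (F : finFieldType) (k : nat) (Us : nat -> {vspace 'cV[F]_k})
    (m : nat) : {set 'cV[F]_k} :=
  \bigcup_(1 <= i < m.+1) [set v in Us i].

Lemma mem_vspace_union (F : finFieldType) (k : nat) (Us : nat -> {vspace 'cV[F]_k}) m v :
  (v \in vspace_union Us m) = has (fun i => v \in Us i) (iota 1 m).
Proof.
rewrite mem_bigcup_nat /index_iota subSS subn0.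
by apply: eq_has => i; rewrite inE.
Qed.

Lemma in_U_scale (F : finFieldType) (k h : nat) (Us : nat -> {vspace 'cV[F]_k}) a v :
  a != 0 -> in_U h Us (a *: v) = in_U h Us v.
Proof.
move=> a_neq0; rewrite /in_U scaler_eq0 (negbTE a_neq0) /=.
by congr (_ && ~~ _); apply: eq_has => i; rewrite rpredZeq (negbTE a_neq0).
Qed.

Section ProjectiveSystem.

Variables (F : finFieldType) (k h n : nat) (Us : nat -> {vspace 'cV[F]_k}).
Variable G : 'M[F]_(k, n).
Hypothesis G_rep : proj_rep_matrix h Us G.

Lemma card_in_U_cols (P : pred 'cV[F]_k) :
  (forall a v, a != 0 -> P (a *: v) = P v) ->
  #|[set v | in_U h Us v && P v]| = (#|[set j | P (col j G)]| * (#|F| - 1))%N.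
Proof.
case: G_rep => col_in_U col_uniq col_cover P_scale.
have col_neq0 j : col j G != 0 by case/andP: (col_in_U j).
pose scaled_col (p : 'I_n * F) := p.2 *: col p.1 G.
pose D := setX [set j | P (col j G)] [set a : F | a != 0].
have -> : [set v | in_U h Us v && P v] = scaled_col @: D.
  apply/setP => v; rewrite inE; apply/andP/imsetP => [[v_U Pv] | [[j a]]].
    have [j [a [a_neq0 col_j]]] := col_cover v v_U.
    exists (j, a^-1); first by rewrite !inE col_j P_scale // invr_eq0 a_neq0 andbT.
    by rewrite /scaled_col /= col_j scalerA mulVf ?scale1r.
  rewrite !inE /= => /andP[Pj a_neq0] ->; rewrite /scaled_col /=.
  by rewrite in_U_scale // P_scale // col_in_U.
rewrite card_in_imset ?cardsX; last first.
  move=> [j1 a1] [j2 a2] /[!inE] /andP[_ a1_neq0] /andP[_ a2_neq0].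
  rewrite /scaled_col /= => same_scaled.
  have j12 : j1 = j2.
    apply/eqP; apply: contraT => /col_uniq; case; exists (a2^-1 * a1).
    by rewrite mulf_neq0 ?invr_eq0 // -scalerA same_scaled scalerA mulVf ?scale1r.
  move: same_scaled; rewrite -j12 => /eqP; rewrite -subr_eq0 -scalerBl scaler_eq0.
  by rewrite (negbTE (col_neq0 j1)) orbF subr_eq0 => /eqP ->.
rewrite (_ : [set a : F | a != 0] = [set~ 0]) ?cardsC1 ?subn1 //.
by apply/setP => a; rewrite !inE.
Qed.

Lemma wt_mulmx (x : 'rV[F]_k) : wt (x *m G) = #|[set j | x *m col j G != 0]|.
Proof.
apply: eq_card => j; rewrite !inE colE mulmxA -colE; congr (~~ _).
apply/eqP/eqP => [xGj0 | /matrixP/(_ 0 0)]; last by rewrite !mxE.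
by apply/matrixP => i i'; rewrite !ord1 [LHS]mxE xGj0 mxE.
Qed.

Hypothesis h_gt0 : (0 < h)%N.

Lemma in_U_vspace_union v : in_U h Us v = (v \notin vspace_union Us h).
Proof.
rewrite /in_U mem_vspace_union; have [-> | //] := eqVneq v 0.
by apply/esym/negbF/hasP; exists 1%N; rewrite ?mem_iota ?ltnS // mem0v.
Qed.

Lemma card_cols_vspace_union : (n * (#|F| - 1) + #|vspace_union Us h| = #|F| ^ k)%N.
Proof.
have := card_in_U_cols (P := predT) (fun _ _ _ => erefl).
rewrite (_ : [set v | _] = ~: vspace_union Us h); last first.
  by apply/setP => v; rewrite !inE in_U_vspace_union andbT.
rewrite (_ : [set j | _] = setT) ?cardsT ?card_ord; last by apply/setP => j; rewrite !inE.
by move=> <-; rewrite addnC cardsC card_mx muln1.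
Qed.

Lemma card_cols_form_neq0 (x : 'rV[F]_k) :
  (#|[set j | x *m col j G != 0%R]| * (#|F| - 1)
     + #|[set v in vspace_union Us h | x *m v != 0%R]|
   = #|[set v : 'cV_k | x *m v != 0%R]|)%N.
Proof.
have scale_inv a (v : 'cV_k) : a != 0 -> (x *m (a *: v) != 0) = (x *m v != 0).
  by move=> a_neq0; rewrite -scalemxAr scaler_eq0 (negbTE a_neq0).
have /= <- := card_in_U_cols scale_inv.
rewrite -(cardsID (vspace_union Us h) [set v : 'cV_k | x *m v != 0]) addnC.
by congr (_ + _)%N; apply: eq_card => v; rewrite !inE ?in_U_vspace_union andbC.
Qed.

Lemma rank_proj_rep :
  (#|vspace_union Us h| <= #|F| ^ k.-1 * (#|F| - 1))%N -> \rank G = k.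
Proof.
move=> card_union; apply/eqP; rewrite eqn_leq rank_leq_row /=.
apply: contraLR card_union; rewrite -!ltnNge => rank_lt.
pose x := nz_row (kermx G).
have x_neq0 : x != 0 by rewrite nz_row_eq0 -mxrank_eq0 mxrank_ker subn_eq0 -ltnNge.
have xG0 : x *m G = 0 by apply/sub_kermxP; apply: nz_row_sub.
rewrite -(card_form_neq0 x_neq0) -(card_cols_form_neq0 x).
rewrite (_ : [set j | _] = set0) ?cards0 ?mul0n ?add0n; last first.
  by apply/setP => j; rewrite !inE colE mulmxA xG0 mul0mx eqxx.
apply: proper_card; apply/properP; split.
  by apply/subsetP => v; rewrite inE => /andP[].
exists 0; last by rewrite inE mulmx0 eqxx andbF.
by rewrite -[_ \in _]negbK -in_U_vspace_union /in_U eqxx.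
Qed.

Lemma leq_wt_proj_rep (x : 'rV[F]_k) : x *m G != 0 ->
  (#|F| ^ k.-1 <= wt (x *m G) + \sum_(1 <= i < h.+1) #|F| ^ (\dim (Us i)).-1)%N.
Proof.
move=> xG_neq0; have x_neq0 : x != 0 by apply: contraNneq xG_neq0 => ->; rewrite mul0mx.
have q1_gt0 : (0 < #|F| - 1)%N by rewrite subn_gt0 finNzRing_gt1.
rewrite -(leq_pmul2r q1_gt0) -(card_form_neq0 x_neq0) -(card_cols_form_neq0 x).
rewrite mulnDl big_distrl /= wt_mulmx leq_add2l.
pose nz_part i := [set v in Us i | x *m v != 0].
apply: (@leq_trans #|\bigcup_(1 <= i < h.+1) nz_part i|).
  apply: subset_leq_card; apply/subsetP => v; rewrite !inE mem_vspace_union mem_bigcup_nat.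
  case/andP => /hasP[i i_range v_Ui] xv_neq0; apply/hasP; exists i.
    by rewrite /index_iota subSS subn0.
  by rewrite inE v_Ui.
apply: leq_trans (leq_card_bigcup _ _) _.
by apply: leq_sum => i _; apply: card_vspace_form_neq0_le.
Qed.

End ProjectiveSystem.

Section SunflowerOfSubspaces.

Variables (F : finFieldType) (k h : nat) (u : nat -> nat) (Us : nat -> {vspace 'cV[F]_k}).
Hypotheses (h_ge2 : (2 <= h)%N) (dim_Us : forall i, (i <= h)%N -> \dim (Us i) = u i).
Hypothesis cap_Us : forall i j, (1 <= i <= h)%N -> (1 <= j <= h)%N -> i != j ->
  (Us i :&: Us j)%VS = Us 0%N.

Lemma sunflower_core_subv i : (1 <= i <= h)%N -> (Us 0%N <= Us i)%VS.
Proof.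
move=> i_range; have [j j_range i_neq_j] : exists2 j, (1 <= j <= h)%N & i != j.
  have h_gt0 : (0 < h)%N := ltnW h_ge2.
  by case: (eqVneq i 1%N) => [->|?]; [exists 2%N | exists 1%N]; rewrite ?h_ge2 ?h_gt0.
by rewrite -(cap_Us i_range j_range i_neq_j) capvSl.
Qed.

Lemma card_vspace_union_sunflower (R : pzRingType) :
  (#|vspace_union Us h|%:R : R) =
    #|F|%:R ^+ u 0%N + \sum_(1 <= i < h.+1) (#|F|%:R ^+ u i - #|F|%:R ^+ u 0%N).
Proof.
have h_gt0 : (0 < h)%N := ltnW h_ge2.
have core_sub i : (1 <= i <= h)%N -> [set v in Us 0%N] \subset [set v in Us i].
  move=> i_range; apply/subsetP => v; rewrite !inE.
  exact: (subvP (sunflower_core_subv i_range)).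
have card_Us i : (i <= h)%N -> #|[set v in Us i]| = (#|F| ^ u i)%N.
  by move=> le_ih; rewrite cardsE card_vspace dim_Us.
have -> : vspace_union Us h = [set v in Us 0%N] :|: vspace_union Us h.
  apply/esym/setUidPr/subsetP => v v_U0; rewrite mem_vspace_union; apply/hasP; exists 1%N.
    by rewrite mem_iota leqnn add1n ltnS h_gt0.
  by have /subsetP/(_ v v_U0) := core_sub 1%N h_gt0; rewrite inE.
rewrite /vspace_union card_sunflower; last first.
  move=> i j i_range j_range i_neq_j; apply/subsetP => v.
  by rewrite !inE -memv_cap cap_Us.
rewrite natrD natr_sum card_Us // natrX; congr (_ + _); apply: eq_big_nat => i /andP[i_gt0].
rewrite ltnS => le_ih; rewrite cardsD (setIidPr (core_sub i _)) ?i_gt0 //.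
rewrite natrB ?card_Us ?natrX //; last by rewrite -!card_Us // subset_leq_card ?core_sub ?i_gt0.
Qed.

End SunflowerOfSubspaces.

Theorem theorem3p1 (F : finFieldType) (k h : nat) (u : nat -> nat)
  (Us : nat -> {vspace 'cV[F]_k}) (n : nat) (G : 'M[F]_(k, n)) :
  (3 <= k)%N -> (2 <= h)%N ->
  (1 <= u 0%N)%N -> (u 0%N < u 1%N)%N ->
  (forall i, (1 <= i < h)%N -> (u i <= u i.+1)%N) ->
  (forall i, (i <= h)%N -> \dim (Us i) = u i) ->
  (forall i j, (1 <= i <= h)%N -> (1 <= j <= h)%N -> i != j ->
     (Us i :&: Us j)%VS = Us 0%N) ->
  ((#|F|%:Z ^+ k - #|F|%:Z ^+ k.-1) >
     (#|F|%:Z ^+ u 0%N - 1) +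
     \sum_(1 <= i < h.+1) (#|F|%:Z ^+ u i - #|F|%:Z ^+ u 0%N))%R ->
  proj_rep_matrix h Us G ->
  [/\ (n%:R : rat) =
        ((#|F|%:R ^+ k - #|F|%:R ^+ u 0%N)
         - \sum_(1 <= i < h.+1) (#|F|%:R ^+ u i - #|F|%:R ^+ u 0%N))
        / (#|F|%:R - 1),
      \rank G = k &
      forall x : 'rV[F]_k, x *m G != 0 ->
        (#|F|%:Z ^+ k.-1 - \sum_(1 <= i < h.+1) #|F|%:Z ^+ (u i).-1
           <= (wt (x *m G))%:Z)%R].
Proof.
move=> k_ge3 h_ge2 _ _ _ dim_Us cap_Us q_bound G_rep.
have h_gt0 : (0 < h)%N := ltnW h_ge2.
have q_gt1 : (1 < #|F|)%N := finNzRing_gt1 F.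
have card_union R := card_vspace_union_sunflower h_ge2 dim_Us cap_Us R.
split.
- have /(congr1 (fun m => m%:R : rat)) := card_cols_vspace_union G_rep h_gt0.
  rewrite natrD natrM natrB ?natrX ?card_union 1?ltnW // => card_eq.
  apply: (canRL (mulfK _)); first by rewrite subr_eq0 pnatr_eq1 gtn_eqF.
  by rewrite -card_eq; ring.
- apply: rank_proj_rep G_rep h_gt0 _.
  rewrite -(ler_nat int) natrM natrB 1?ltnW // !natrX card_union !natz.
  rewrite mulrBr mulr1 -exprSr prednK ?(leq_trans _ k_ge3) //.
  by move: q_bound; rewrite addrAC ltrBlDr ltzD1.
- move=> x xG_neq0; rewrite lerBlDr.
  have sum_dim : \sum_(1 <= i < h.+1) (#|F| ^ (\dim (Us i)).-1)%:R =
                 \sum_(1 <= i < h.+1) #|F|%:Z ^+ (u i).-1.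
    by apply: eq_big_nat => i /andP[_]; rewrite ltnS => le_ih; rewrite natrX natz dim_Us.
  have := leq_wt_proj_rep G_rep h_gt0 xG_neq0.
  by rewrite -(ler_nat int) natrD natr_sum natrX !natz sum_dim.
Qed.
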